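(* The rank one extreme contractions in $\mathbb{L}(\ell_4^2)$ are exactly the operators whose matrix representations with respect to the standard ordered basis are of the form $\begin{bmatrix} x_1 & 0\\ y_1 & 0\end{bmatrix}$ or $\begin{bmatrix} 0 & x_1\\ 0 & y_1\end{bmatrix}$, where $x_1y_1\neq0$ and $x_1^4+y_1^4=1$.
   Context: $\ell_4^2$ is $\mathbb{R}^2$ with norm $\|(a,b)\|=(a^4+b^4)^{1/4}$, and $\mathbb{L}(\ell_4^2)$ the space of linear operators on it with the operator norm. An extreme contraction is a norm one operator that is an extreme point of the closed unit ball of $\mathbb{L}(\ell_4^2)$. *)

From HB Require Import structures.
From mathcomp Require Import all_boot all_order all_algebra.
From mathcomp Require Import all_classical all_reals.
Set Implicit Arguments. Unset Strict Implicit. Unset Printing Implicit Defensive.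
Import Order.TTheory GRing.Theory Num.Theory.
Local Open Scope ring_scope.
Local Open Scope classical_set_scope.

Definition norm4 (R : realType) (v : 'cV[R]_2) : R :=
  Num.sqrt (Num.sqrt (v ord0 ord0 ^+ 4 + v ord_max ord0 ^+ 4)).

(* Operators on l_4^2 are identified with their 2x2 matrices w.r.t. the
   standard ordered basis, acting on column vectors: T v = A *m v. *)
Definition opnorm (R : realType) (A : 'M[R]_2) : R :=
  sup [set norm4 (A *m v) | v in [set v : 'cV[R]_2 | norm4 v <= 1]].

Definition in_unit_ball (R : realType) (A : 'M[R]_2) : Prop := opnorm A <= 1.

Definition extreme_point_ball (R : realType) (A : 'M[R]_2) : Prop :=
  in_unit_ball A /\
  forall (B C : 'M[R]_2) (t : R), in_unit_ball B -> in_unit_ball C ->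
    0 < t < 1 -> A = t *: B + (1 - t) *: C -> B = A /\ C = A.

Definition extreme_contraction (R : realType) (A : 'M[R]_2) : Prop :=
  opnorm A = 1 /\ extreme_point_ball A.

From mathcomp Require Import all_boot all_order all_algebra.
From mathcomp Require Import all_classical all_reals.
From mathcomp Require Import ring lra.
Set Implicit Arguments. Unset Strict Implicit. Unset Printing Implicit Defensive.
Import Order.TTheory GRing.Theory Num.Theory.
Local Open Scope ring_scope.

(* A rank-one operator is [v |-> f(v) u].
   If [f] is a coordinate functional, say [A = (u | 0)] with [|u|_4 = 1] and [u1 u2 != 0],
   then in a decomposition [A = t B + (1 - t) C] strict convexity of the l_4 norm forces
   [B e1 = C e1 = u], and a contraction with columns [u] and [w] has [w = 0], since the
   second-order term of [|u + s w|_4^4 <= 1 + s^4] is [6 (u1^2 w1^2 + u2^2 w2^2) s^2].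
   If [u1 u2 = 0], moving the free entry of the zero column keeps [A] contractive.
   If [f = (1, b^3)] is not a coordinate functional, [A + E] and [A - E] are contractions
   for [E = e (u2^3, -u1^3)^T (b, -1)] with [e] small: [(u2^3, -u1^3)] is tangent to the
   sphere at [u], and [(b, -1)] vanishes at the vector [(1, b)] where [f] attains its norm. *)

Section Matrix2.
Variable R : comNzRingType.
Implicit Types (a b c d p q s x y : R).

Definition mx2 (a b c d : R) : 'M[R]_2 :=
  \matrix_(i, j) if i == ord0 then (if j == ord0 then a else b)
                 else (if j == ord0 then c else d).

Definition cv2 (p q : R) : 'cV[R]_2 := \col_i (if i == ord0 then p else q).

Definition swap2 : 'M[R]_2 := mx2 0 1 1 0.

Lemma ord2P (i : 'I_2) : i = ord0 \/ i = ord_max.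
Proof. by case: i => -[|[|//]] ?; [left | right]; apply: val_inj. Qed.

Lemma mx2_eta (A : 'M[R]_2) :
  A = mx2 (A ord0 ord0) (A ord0 ord_max) (A ord_max ord0) (A ord_max ord_max).
Proof.
by apply/matrixP => i j; rewrite mxE; case: (ord2P i) => ->; case: (ord2P j) => ->.
Qed.

Lemma cv2_eta (v : 'cV[R]_2) : v = cv2 (v ord0 ord0) (v ord_max ord0).
Proof. by apply/matrixP => i j; rewrite mxE (ord1 j); case: (ord2P i) => ->. Qed.

Lemma cv2_inj p q p' q' : cv2 p q = cv2 p' q' -> p = p' /\ q = q'.
Proof. by move/matrixP => e; have := e ord0 ord0; have := e ord_max ord0; rewrite !mxE. Qed.

Lemma mx2_eq0 a b c d : mx2 a b c d = 0 -> [/\ a = 0, b = 0, c = 0 & d = 0].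
Proof.
move/matrixP => e; have := e ord0 ord0; have := e ord0 ord_max.
by have := e ord_max ord0; have := e ord_max ord_max; rewrite !mxE.
Qed.

Lemma mx2_1 : 1%:M = mx2 1 0 0 1.
Proof.
by apply/matrixP => i j; rewrite !mxE; case: (ord2P i) => ->; case: (ord2P j) => ->.
Qed.

Lemma mx2_col0E x y :
  \matrix_(i < 2, j < 2) (if j == ord0 then (if i == ord0 then x else y) else 0) = mx2 x 0 y 0.
Proof. by apply/matrixP => i j; rewrite !mxE; case: (ord2P i) => ->; case: (ord2P j) => ->. Qed.

Lemma mx2_col1E x y :
  \matrix_(i < 2, j < 2) (if j == ord_max then (if i == ord0 then x else y) else 0) = mx2 0 x 0 y.
Proof. by apply/matrixP => i j; rewrite !mxE; case: (ord2P i) => ->; case: (ord2P j) => ->. Qed.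

Lemma add_mx2 a b c d a' b' c' d' :
  mx2 a b c d + mx2 a' b' c' d' = mx2 (a + a') (b + b') (c + c') (d + d').
Proof. by apply/matrixP => i j; rewrite !mxE; case: ifP; case: ifP. Qed.

Lemma scale_mx2 s a b c d : s *: mx2 a b c d = mx2 (s * a) (s * b) (s * c) (s * d).
Proof. by apply/matrixP => i j; rewrite !mxE; case: ifP; case: ifP. Qed.

Lemma big_ord2 (F : 'I_2 -> R) : \sum_(k < 2) F k = F ord0 + F ord_max.
Proof. by rewrite big_ord_recl big_ord1; congr (_ + F _); apply: val_inj. Qed.

Lemma mul_mx2 a b c d a' b' c' d' :
  mx2 a b c d *m mx2 a' b' c' d' =
  mx2 (a * a' + b * c') (a * b' + b * d') (c * a' + d * c') (c * b' + d * d').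
Proof.
apply/matrixP => i j; rewrite !mxE big_ord2 !mxE /=.
by case: (ord2P i) => ->; case: (ord2P j) => ->.
Qed.

Lemma mul_mx2_cv2 a b c d p q :
  mx2 a b c d *m cv2 p q = cv2 (a * p + b * q) (c * p + d * q).
Proof. by apply/matrixP => i j; rewrite !mxE big_ord2 !mxE /=; case: (ord2P i) => ->. Qed.

Lemma det_mx2 a b c d : \det (mx2 a b c d) = a * d - b * c.
Proof.
rewrite (expand_det_row _ ord0) big_ord2 /cofactor !det_mx11 !mxE /=.
by rewrite expr0 expr1 mul1r mulN1r mulrN.
Qed.

Lemma swap2K : swap2 *m swap2 = 1%:M.
Proof. by rewrite mul_mx2 mx2_1 !(mul0r, mulr0, mul1r, mulr1, addr0, add0r). Qed.

Lemma mx2_swap a b c d : mx2 a b c d *m swap2 = mx2 b a d c.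
Proof. by rewrite mul_mx2 !(mul0r, mulr0, mul1r, mulr1, addr0, add0r). Qed.

End Matrix2.

Arguments swap2 {R}.

Section Rank2.
Variable F : fieldType.
Implicit Types (x y : F).

Lemma rank_mx2_eq1 (A : 'M[F]_2) : (\rank A == 1%N) = (A != 0) && (\det A == 0).
Proof.
rewrite -mxrank_eq0 -[\det A == 0]negbK -unitfE -unitmxE -row_free_unit /row_free.
by case: (\rank A) (rank_leq_row A) => [|[|[|]]].
Qed.

Lemma rank_eq1_mx2 (A : 'M[F]_2) : \rank A = 1%N ->
  exists a c k, ((a != 0) || (c != 0)) /\
    (A = mx2 a (k * a) c (k * c) \/ A = mx2 0 a 0 c).
Proof.
move/eqP; rewrite rank_mx2_eq1 [A]mx2_eta det_mx2.
move: (A ord0 ord0) (A ord0 ord_max) (A ord_max ord0) (A ord_max ord_max) => a b c d.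
case/andP=> nz; rewrite subr_eq0 => /eqP det0.
have [a0|a0] := eqVneq a 0; last first.
  exists a, c, (b / a); rewrite a0; split=> //; left.
  by rewrite divfK // mulrAC -det0 [a * d]mulrC mulfK.
have [c0|c0] := eqVneq c 0.
  exists b, d, 0; split; last by right; rewrite a0 c0.
  apply: contraNT nz; rewrite negb_or !negbK a0 c0 => /andP[/eqP-> /eqP->].
  by apply/eqP/matrixP => i j; rewrite !mxE !if_same.
have b0 : b = 0.
  by apply/eqP; move: det0; rewrite a0 mul0r => /esym/eqP; rewrite mulf_eq0 (negPf c0) orbF.
exists 0, c, (d / c); rewrite c0 orbT; split=> //; left.
by rewrite a0 b0 mulr0 divfK.
Qed.

Lemma rank_mx2_col x y : (x != 0) || (y != 0) -> \rank (mx2 x 0 y 0) = 1%N.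
Proof.
move=> xy0; apply/eqP; rewrite rank_mx2_eq1 det_mx2 mulr0 mul0r subrr eqxx andbT.
by apply: contraTneq xy0 => /mx2_eq0[-> _ -> _]; rewrite eqxx.
Qed.

Lemma mxrank_swap (A : 'M[F]_2) : \rank (A *m swap2) = \rank A.
Proof. by rewrite mxrankMfree // row_free_unit; case: (mulmx1_unit (swap2K F)). Qed.

End Rank2.

Section QuarticInequalities.
Variable R : realFieldType.
Implicit Types (b e p q t u x y : R).

Lemma pow4_ge0 x : 0 <= x ^+ 4.
Proof. exact: exprn_even_ge0. Qed.

Lemma pow4D_le x y : (x + y) ^+ 4 <= 8 * (x ^+ 4 + y ^+ 4).
Proof.
rewrite -subr_ge0.
have -> : 8 * (x ^+ 4 + y ^+ 4) - (x + y) ^+ 4 =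
  (x - y) ^+ 2 * (5 * (x + y) ^+ 2 + 2 * x ^+ 2 + 2 * y ^+ 2) by ring.
by rewrite mulr_ge0 ?sqr_ge0 // !addr_ge0 // mulr_ge0 // sqr_ge0.
Qed.

Lemma pow4_strict_convex t x y : 0 < t < 1 -> x != y ->
  (t * x + (1 - t) * y) ^+ 4 < t * x ^+ 4 + (1 - t) * y ^+ 4.
Proof.
case/andP=> t0 t1 xy; rewrite -subr_gt0.
set u := t * x + (1 - t) * y; set e := x - y.
have -> : t * x ^+ 4 + (1 - t) * y ^+ 4 - u ^+ 4 = t * (1 - t) * e ^+ 2 *
    (6 * (u + (1 - 2 * t) * e / 3) ^+ 2 + (1 - t + t ^+ 2) / 3 * e ^+ 2).
  by rewrite /u /e; field.
have e2 : 0 < e ^+ 2 by rewrite exprn_even_gt0 // subr_eq0.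
apply: mulr_gt0; first by rewrite mulr_gt0 // mulr_gt0 // subr_gt0.
apply: ltr_wpDl; first by rewrite mulr_ge0 ?sqr_ge0.
by rewrite mulr_gt0 // divr_gt0 //; nra.
Qed.

Lemma pow4_convex t x y : 0 < t < 1 ->
  (t * x + (1 - t) * y) ^+ 4 <= t * x ^+ 4 + (1 - t) * y ^+ 4.
Proof.
move=> t01; have [->|xy] := eqVneq x y; last exact/ltW/pow4_strict_convex.
by rewrite -!mulrDl addrC subrK !mul1r.
Qed.

(* Hoelder's inequality [|p + b^3 q| <= (1 + b^4)^(3/4) (p^4 + q^4)^(1/4)] with a
   second-order defect in [b p - q], the distance to the norming direction [(1, b)]. *)
Lemma holder4_defect b p q :
  (p + b ^+ 3 * q) ^+ 4 + (b * p - q) ^+ 2 *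
    (2 * b ^+ 2 * (p + b ^+ 3 * q) ^+ 2 + b ^+ 4 * (b * p - q) ^+ 2)
  <= (1 + b ^+ 4) ^+ 3 * (p ^+ 4 + q ^+ 4).
Proof.
rewrite -subr_ge0.
have -> : (1 + b ^+ 4) ^+ 3 * (p ^+ 4 + q ^+ 4) - ((p + b ^+ 3 * q) ^+ 4 + (b * p - q) ^+ 2 *
    (2 * b ^+ 2 * (p + b ^+ 3 * q) ^+ 2 + b ^+ 4 * (b * p - q) ^+ 2)) =
  ((b * p - q) * (2 * b * (p + b ^+ 3 * q) + (b ^+ 4 - 1) * (b * p - q))) ^+ 2 by ring.
exact: sqr_ge0.
Qed.

(* [(u2^3, -u1^3)] is tangent at [(u1, u2)] to the level set of [x^4 + y^4]: the
   perturbation in that direction has no first-order term in [e]. *)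
Lemma pow4_tangent_perturb (u1 u2 : R) : exists2 X, 0 <= X & forall e F r, e ^+ 2 <= 1 ->
  (F * u1 + e * r * u2 ^+ 3) ^+ 4 + (F * u2 - e * r * u1 ^+ 3) ^+ 4
  <= (u1 ^+ 4 + u2 ^+ 4) * F ^+ 4 + r ^+ 2 * (e ^+ 2 * (X * (F ^+ 2 + r ^+ 2))).
Proof.
set U := u1 ^+ 4 + u2 ^+ 4; set al := u1 ^+ 2 * u2 ^+ 2 * U.
set be := u1 * u2 ^+ 9 - u2 * u1 ^+ 9; set ga := u1 ^+ 12 + u2 ^+ 12.
have al0 : 0 <= al by rewrite /al /U mulr_ge0 ?addr_ge0 ?exprn_even_ge0 // mulr_ge0 ?sqr_ge0.
have ga0 : 0 <= ga by rewrite /ga addr_ge0 ?exprn_even_ge0.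
exists (6 * al + 2 + 2 * be ^+ 2 + ga); first by have := sqr_ge0 be; lra.
move=> e F r e1.
have -> : (F * u1 + e * r * u2 ^+ 3) ^+ 4 + (F * u2 - e * r * u1 ^+ 3) ^+ 4 =
    U * F ^+ 4 + r ^+ 2 * (e ^+ 2 * (6 * al * F ^+ 2 + 4 * F * (e * r) * be + (e * r) ^+ 2 * ga)).
  by rewrite /al /be /ga /U; ring.
rewrite lerD2l; do 2 (apply: ler_wpM2l; first exact: sqr_ge0).
have cross : 4 * F * (e * r) * be <= 2 * F ^+ 2 + 2 * be ^+ 2 * r ^+ 2.
  have := sqr_ge0 (F - e * r * be); have := mulr_ge0 (sqr_ge0 (be * r)) (sqr_ge0 e).
  have := sqr_ge0 (be * r); rewrite !exprMn; nra.
have quad : (e * r) ^+ 2 * ga <= r ^+ 2 * ga.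
  by rewrite exprMn -mulrA ler_piMl // mulr_ge0 ?sqr_ge0.
have := mulr_ge0 al0 (sqr_ge0 r); have := mulr_ge0 (sqr_ge0 be) (sqr_ge0 F).
have := sqr_ge0 r; have := mulr_ge0 ga0 (sqr_ge0 F); lra.
Qed.

Lemma pow4_rank1_perturb u1 u2 b : b != 0 -> 0 < u1 ^+ 4 + u2 ^+ 4 ->
  (u1 ^+ 4 + u2 ^+ 4) * (1 + b ^+ 4) ^+ 3 <= 1 ->
  exists2 e, 0 < e & forall s p q, s ^+ 2 <= e ^+ 2 ->
    ((p + b ^+ 3 * q) * u1 + s * (b * p - q) * u2 ^+ 3) ^+ 4 +
    ((p + b ^+ 3 * q) * u2 - s * (b * p - q) * u1 ^+ 3) ^+ 4 <= p ^+ 4 + q ^+ 4.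
Proof.
set U := u1 ^+ 4 + u2 ^+ 4 => b0 U0 UN.
have [X X0 tangent] := pow4_tangent_perturb u1 u2.
have b2 : 0 < b ^+ 2 by rewrite exprn_even_gt0.
have b4 : b ^+ 4 = b ^+ 2 * b ^+ 2 by rewrite -exprD.
set Y := U * b ^+ 4 / (1 + b ^+ 2).
have b21 : 0 < 1 + b ^+ 2 by rewrite addr_gt0.
have Y0 : 0 < Y by rewrite /Y divr_gt0 // mulr_gt0 // exprn_even_gt0.
have [Yb4 Yb2] : Y <= U * b ^+ 4 /\ Y <= U * b ^+ 2.
  have Ub2 := mulr_gt0 U0 b2; have := mulr_gt0 Ub2 b2.
  by rewrite /Y !ler_pdivrMr // b4; split; nra.
exists (Y / (X + Y)) => [|s p q se]; first by rewrite divr_gt0 ?ltr_wpDl.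
set e := Y / (X + Y) in se *.
have XY : 0 < X + Y by rewrite ltr_wpDl.
have e0 : 0 <= e by rewrite divr_ge0 ?ltW.
have e1 : e <= 1 by rewrite /e ler_pdivrMr // mul1r lerDr.
have ee : e ^+ 2 <= e by rewrite expr2 ler_piMl.
have s1 := le_trans se (le_trans ee e1).
have sX : s ^+ 2 * X <= Y.
  apply: le_trans (ler_wpM2r X0 (le_trans se ee)) _.
  by rewrite /e mulrAC ler_pdivrMr // ler_pM2l // lerDl ltW.
set F := p + b ^+ 3 * q; set r := b * p - q.
apply: le_trans (tangent s F r s1) _; rewrite -/U.
have := holder4_defect b p q; rewrite -/F -/r => holder; clearbody F r.
have inner : s ^+ 2 * (X * (F ^+ 2 + r ^+ 2)) <= U * (2 * b ^+ 2 * F ^+ 2 + b ^+ 4 * r ^+ 2).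
  have F2 := sqr_ge0 F; have := mulr_ge0 (mulr_ge0 (ltW U0) (ltW b2)) F2.
  have := ler_wpM2r F2 (le_trans sX Yb2); have := ler_wpM2r (sqr_ge0 r) (le_trans sX Yb4).
  rewrite !mulrA !mulrDr; lra.
apply: le_trans (_ : _ <= U * F ^+ 4 + r ^+ 2 * (U * (2 * b ^+ 2 * F ^+ 2 + b ^+ 4 * r ^+ 2))) _.
  by rewrite lerD2l ler_wpM2l ?sqr_ge0.
rewrite [r ^+ 2 * _]mulrCA -mulrDr; apply: le_trans (ler_wpM2l (ltW U0) holder) _.
by rewrite mulrA ler_piMl // addr_ge0 ?pow4_ge0.
Qed.

End QuarticInequalities.

Section RealClosed.
Variable R : rcfType.
Implicit Types (k s x y : R).

Lemma exists_cube_root k : exists b, b ^+ 3 = k.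
Proof.
set m : R := `|k| + 1.
have m1 : 1 <= m by rewrite lerDr.
have : `|k| <= m ^+ 3 by apply: le_trans (ler_eXnr (n := 3) isT m1); rewrite lerDl.
rewrite ler_norml => /andP[km1 km2].
have sign : ('X^3 - k%:P).[- m] <= 0 <= ('X^3 - k%:P).[m].
  by rewrite !hornerE exprNn (_ : (-1) ^+ 3 = -1 :> R) ?mulN1r; [apply/andP; split; lra | ring].
have mm : - m <= m by lra.
have [b _ /rootP] := poly_ivt mm sign.
by rewrite !hornerE => /eqP; rewrite subr_eq0 => /eqP; exists b.
Qed.

Lemma pow4_tangent_eq0 x y (w1 w2 : R) : x * y != 0 -> x ^+ 4 + y ^+ 4 = 1 ->
  (forall s, (x + w1 * s) ^+ 4 + (y + w2 * s) ^+ 4 <= 1 + s ^+ 4) -> w1 = 0 /\ w2 = 0.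
Proof.
move=> xy0 xy1 le_s; set c := x ^+ 2 * w1 ^+ 2 + y ^+ 2 * w2 ^+ 2.
have cx : 0 <= x ^+ 2 * w1 ^+ 2 by rewrite mulr_ge0 ?sqr_ge0.
have cy : 0 <= y ^+ 2 * w2 ^+ 2 by rewrite mulr_ge0 ?sqr_ge0.
(* the odd powers of [s] cancel in the sum of the bounds at [s] and [-s] *)
have even s : 6 * c * s ^+ 2 <= s ^+ 4.
  have := le_s s; have := le_s (- s).
  have := mulr_ge0 (addr_ge0 (pow4_ge0 w1) (pow4_ge0 w2)) (pow4_ge0 s).
  have -> : (- s) ^+ 4 = s ^+ 4 by ring.
  have : (x + w1 * s) ^+ 4 + (x + w1 * - s) ^+ 4 + ((y + w2 * s) ^+ 4 + (y + w2 * - s) ^+ 4)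
    = 2 * (x ^+ 4 + y ^+ 4) + 12 * c * s ^+ 2 + 2 * ((w1 ^+ 4 + w2 ^+ 4) * s ^+ 4).
    by rewrite /c; ring.
  lra.
have c0 : c = 0.
  have := even (Num.sqrt c); rewrite -[4%N]/(2 * 2)%N exprM sqr_sqrtr ?addr_ge0 //; nra.
move: c0 xy0; rewrite /c => c0; rewrite mulf_eq0 negb_or => /andP[x0 y0].
have /eqP : x ^+ 2 * w1 ^+ 2 = 0 by lra.
have /eqP : y ^+ 2 * w2 ^+ 2 = 0 by lra.
by rewrite !mulf_eq0 !orbb (negPf x0) (negPf y0) => /eqP-> /eqP->.
Qed.

End RealClosed.

Section L4Norm.
Variable R : realType.
Implicit Types (a b c d k p q s t x y : R) (A D E : 'M[R]_2) (v w : 'cV[R]_2).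

Definition qnorm v : R := v ord0 ord0 ^+ 4 + v ord_max ord0 ^+ 4.

Definition contraction A := forall v, qnorm (A *m v) <= qnorm v.

Lemma qnorm_ge0 v : 0 <= qnorm v.
Proof. by rewrite addr_ge0 ?pow4_ge0. Qed.

Lemma qnorm_cv2 p q : qnorm (cv2 p q) = p ^+ 4 + q ^+ 4.
Proof. by rewrite /qnorm !mxE. Qed.

Lemma qnormZ s v : qnorm (s *: v) = s ^+ 4 * qnorm v.
Proof. by rewrite /qnorm !mxE mulrDr !exprMn. Qed.

Lemma qnorm_eq0 v : qnorm v = 0 -> v = 0.
Proof.
move=> /eqP; rewrite paddr_eq0 ?pow4_ge0 // !expf_eq0 /= => /andP[/eqP v0 /eqP v1].
by rewrite [v]cv2_eta v0 v1; apply/matrixP => i j; rewrite !mxE if_same.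
Qed.

Lemma sqrt4K x : 0 <= x -> Num.sqrt (Num.sqrt x) ^+ 4 = x.
Proof. by move=> x0; rewrite -[4%N]/(2 * 2)%N exprM !sqr_sqrtr ?sqrtr_ge0. Qed.

Lemma ler_sqrt4 x y : 0 <= y ->
  (Num.sqrt (Num.sqrt x) <= Num.sqrt (Num.sqrt y)) = (x <= y).
Proof. by move=> y0; rewrite ler_sqrt ?sqrtr_ge0 // ler_sqrt. Qed.

Lemma norm4_le1 v : (norm4 v <= 1) = (qnorm v <= 1).
Proof. by rewrite -(ler_sqrt4 (qnorm v) ler01) !sqrtr1. Qed.

Lemma contraction_mx2 a b c d : contraction (mx2 a b c d) <->
  forall p q, (a * p + b * q) ^+ 4 + (c * p + d * q) ^+ 4 <= p ^+ 4 + q ^+ 4.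
Proof.
split=> [cA p q | cA v]; first by have := cA (cv2 p q); rewrite mul_mx2_cv2 !qnorm_cv2.
by rewrite [v]cv2_eta mul_mx2_cv2 !qnorm_cv2.
Qed.

Lemma qnorm_mulmx_le A : exists2 M, 0 <= M & forall v, qnorm (A *m v) <= M * qnorm v.
Proof.
rewrite [A]mx2_eta; move: (A ord0 ord0) (A ord0 ord_max) (A ord_max ord0) (A ord_max ord_max).
move=> a b c d; exists (8 * (a ^+ 4 + b ^+ 4 + c ^+ 4 + d ^+ 4)).
  by rewrite mulr_ge0 // !addr_ge0 ?pow4_ge0.
move=> v; rewrite [v]cv2_eta mul_mx2_cv2 !qnorm_cv2.
move: (v ord0 ord0) (v ord_max ord0) => p q.
have row x y : (x * p + y * q) ^+ 4 <= 8 * (x ^+ 4 + y ^+ 4) * (p ^+ 4 + q ^+ 4).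
  apply: le_trans (pow4D_le _ _) _; rewrite -mulrA ler_pM2l // !exprMn.
  have := pow4_ge0 x; have := pow4_ge0 y; have := pow4_ge0 p; have := pow4_ge0 q; nra.
have := row a b; have := row c d.
have := pow4_ge0 a; have := pow4_ge0 b; have := pow4_ge0 c; have := pow4_ge0 d.
have := pow4_ge0 p; have := pow4_ge0 q; nra.
Qed.

Lemma norm4E v : norm4 v = Num.sqrt (Num.sqrt (qnorm v)).
Proof. by []. Qed.

Lemma opnorm_ubound A K : 0 <= K -> (forall v, qnorm v <= 1 -> qnorm (A *m v) <= K) ->
  ubound [set norm4 (A *m v) | v in [set v | norm4 v <= 1]] (Num.sqrt (Num.sqrt K)).
Proof. by move=> K0 AK _ [v /= v1 <-]; rewrite norm4E ler_sqrt4 // AK -?norm4_le1. Qed.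

Lemma le_opnorm A v : norm4 v <= 1 -> norm4 (A *m v) <= opnorm A.
Proof.
move=> v1; apply: ub_le_sup; last by exists v.
have [M M0 AM] := qnorm_mulmx_le A; exists (Num.sqrt (Num.sqrt M)).
by apply: opnorm_ubound => // w w1; apply: le_trans (AM w) _; rewrite ler_piMr.
Qed.

Lemma opnorm_le A K : 0 <= K -> (forall v, qnorm v <= 1 -> qnorm (A *m v) <= K) ->
  opnorm A <= Num.sqrt (Num.sqrt K).
Proof.
move=> K0 AK; apply: ge_sup; last exact: opnorm_ubound.
by exists (norm4 (A *m 0)), 0; rewrite //= norm4_le1 /qnorm !mxE expr0n addr0 ler01.
Qed.

Lemma in_unit_ballP A : in_unit_ball A <-> contraction A.
Proof.
split=> [A1 v | cA]; last first.
  apply: le_trans (opnorm_le ler01 _) _; last by rewrite !sqrtr1.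
  by move=> v v1; apply: le_trans (cA v) v1.
have [/qnorm_eq0 ->|v0] := eqVneq (qnorm v) 0.
  by rewrite mulmx0 /qnorm !mxE expr0n addr0.
have v_gt0 : 0 < qnorm v by rewrite lt_def v0 qnorm_ge0.
set s := (Num.sqrt (Num.sqrt (qnorm v)))^-1.
have s_gt0 : 0 < s by rewrite invr_gt0 !sqrtr_gt0.
have s4 : s ^+ 4 * qnorm v = 1 by rewrite exprVn sqrt4K ?qnorm_ge0 // mulVf.
have sv1 : norm4 (s *: v) <= 1 by rewrite norm4_le1 qnormZ s4.
have := le_trans (le_opnorm A sv1) A1.
by rewrite -scalemxAr norm4_le1 qnormZ -s4 ler_pM2l ?exprn_gt0.
Qed.

Lemma opnorm_col a c : opnorm (mx2 a 0 c 0) = Num.sqrt (Num.sqrt (a ^+ 4 + c ^+ 4)).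
Proof.
have ac0 : 0 <= a ^+ 4 + c ^+ 4 by rewrite addr_ge0 ?pow4_ge0.
apply/eqP; rewrite eq_le; apply/andP; split.
  apply: opnorm_le => // v; rewrite [v]cv2_eta mul_mx2_cv2 !qnorm_cv2.
  move: (v ord0 ord0) (v ord_max ord0) => p q pq1.
  rewrite !mul0r !addr0 !exprMn -mulrDl ler_piMr //.
  by have := pow4_ge0 q; lra.
have e1 : norm4 (cv2 1 0 : 'cV[R]_2) <= 1 by rewrite norm4_le1 qnorm_cv2 expr1n expr0n addr0.
by have := le_opnorm (mx2 a 0 c 0) e1; rewrite mul_mx2_cv2 norm4E qnorm_cv2 !mulr1 !mulr0 !addr0.
Qed.

Lemma opnorm_col_eq1 a c : opnorm (mx2 a 0 c 0) = 1 <-> a ^+ 4 + c ^+ 4 = 1.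
Proof.
rewrite opnorm_col; split=> [ac1 | ->]; last by rewrite !sqrtr1.
by rewrite -(sqrt4K (addr_ge0 (pow4_ge0 a) (pow4_ge0 c))) ac1 expr1n.
Qed.

Lemma norm4_swap v : norm4 (swap2 *m v) = norm4 v.
Proof.
by rewrite [v]cv2_eta mul_mx2_cv2 !norm4E !qnorm_cv2 !mul0r !mul1r add0r addr0 addrC.
Qed.

Lemma opnorm_swap A : opnorm (A *m swap2) = opnorm A.
Proof.
rewrite /opnorm; congr sup; apply/seteqP; split=> _ [v /= v1 <-].
  by exists (swap2 *m v); rewrite /= ?norm4_swap // mulmxA.
exists (swap2 *m v); rewrite /= ?norm4_swap //.
by rewrite -mulmxA (mulmxA swap2) swap2K mul1mx.
Qed.

Lemma extreme_contraction_swap A : extreme_contraction A -> extreme_contraction (A *m swap2).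
Proof.
rewrite /extreme_contraction /extreme_point_ball /in_unit_ball opnorm_swap.
move=> [A1 [_ extA]]; split=> //; split=> [|B C t B1 C1 t01 defA]; first by rewrite A1.
have swapK M : M *m swap2 *m swap2 = M by rewrite -mulmxA swap2K mulmx1.
have [BA CA] : B *m swap2 = A /\ C *m swap2 = A.
  apply: (extA _ _ t); rewrite ?opnorm_swap //.
  by rewrite -[A]swapK defA mulmxDl -!scalemxAl.
by split; [rewrite -BA | rewrite -CA]; rewrite swapK.
Qed.

Lemma qnorm_strict_convex t v w : 0 < t < 1 -> qnorm v <= 1 -> qnorm w <= 1 ->
  qnorm (t *: v + (1 - t) *: w) = 1 -> v = w.
Proof.
move=> t01; rewrite /qnorm !mxE => v1 w1 vw1.
have [t0 t1] : 0 <= t /\ 0 <= 1 - t by case/andP: t01 => *; split; lra.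
have coord x x' y y' : x ^+ 4 + x' ^+ 4 <= 1 -> y ^+ 4 + y' ^+ 4 <= 1 ->
    (t * x + (1 - t) * y) ^+ 4 + (t * x' + (1 - t) * y') ^+ 4 = 1 -> x = y.
  move=> xx1 yy1 xy1; have [//|/(pow4_strict_convex t01) lt_xy] := eqVneq x y.
  have := pow4_convex x' y' t01; have := ler_wpM2l t0 xx1; have := ler_wpM2l t1 yy1.
  by lra.
have e1 : v ord_max ord0 = w ord_max ord0.
  by apply: (coord _ (v ord0 ord0) _ (w ord0 ord0)); rewrite addrC.
by rewrite [v]cv2_eta [w]cv2_eta (coord _ _ _ _ v1 w1 vw1) e1.
Qed.

Lemma contraction_mx2_col x y b d : x * y != 0 -> x ^+ 4 + y ^+ 4 = 1 ->
  contraction (mx2 x b y d) -> b = 0 /\ d = 0.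
Proof.
move=> xy0 xy1 /contraction_mx2 cD; apply: pow4_tangent_eq0 xy0 xy1 _ => s.
by have := cD 1 s; rewrite !mulr1 expr1n.
Qed.

Lemma extreme_contraction_col x y : x * y != 0 -> x ^+ 4 + y ^+ 4 = 1 ->
  extreme_contraction (mx2 x 0 y 0).
Proof.
move=> xy0 xy1; have A1 : opnorm (mx2 x 0 y 0) = 1 by apply/opnorm_col_eq1.
split=> //; split=> [|B C t /in_unit_ballP cB /in_unit_ballP cC t01 defA].
  by rewrite /in_unit_ball A1.
have e1 : mx2 x 0 y 0 *m cv2 1 0 = cv2 x y by rewrite mul_mx2_cv2 !mulr1 !mulr0 !addr0.
have e1_unit : qnorm (cv2 x y) = 1 by rewrite qnorm_cv2.
have e1_ball : qnorm (cv2 (1 : R) 0) <= 1 by rewrite qnorm_cv2 expr1n expr0n addr0.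
have BC : B *m cv2 1 0 = C *m cv2 1 0.
  apply: (qnorm_strict_convex t01); rewrite ?(le_trans (cB _)) ?(le_trans (cC _)) //.
  by rewrite !scalemxAl -mulmxDl -defA e1.
have col1 D : contraction D -> D *m cv2 1 0 = cv2 x y -> D = mx2 x 0 y 0.
  rewrite [D]mx2_eta mul_mx2_cv2 !mulr1 !mulr0 !addr0 => cD /cv2_inj[Dx Dy].
  move: cD; rewrite Dx Dy => /(contraction_mx2_col xy0 xy1)[-> ->] //.
have BA : B *m cv2 1 0 = cv2 x y.
  by rewrite -e1 defA mulmxDl -!scalemxAl -BC -scalerDl addrC subrK scale1r.
by split; apply: col1; rewrite // -BC.
Qed.

Lemma extreme_point_ball_perturb A E : extreme_point_ball A ->
  (forall s, s ^+ 2 = 1 -> contraction (A + s *: E)) -> E = 0.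
Proof.
move=> [_ extA] cE.
have [AE1 AE2] : in_unit_ball (A + E) /\ in_unit_ball (A - E).
  split; apply/in_unit_ballP; [rewrite -[E]scale1r | rewrite -scaleN1r].
    by apply: cE; rewrite expr1n.
  by apply: cE; rewrite sqrrN expr1n.
have t01 : 0 < (1 / 2 : R) < 1 by apply/andP; split; lra.
have [+ _] := extA _ _ _ AE1 AE2 t01 (ltac:(by apply/matrixP => i j; rewrite !mxE; field)).
by rewrite -[RHS]addr0 => /addrI.
Qed.

Lemma not_extreme_coord_col a c : a * c = 0 -> a ^+ 4 + c ^+ 4 = 1 ->
  ~ extreme_point_ball (mx2 a 0 c 0).
Proof.
move=> ac0 ac1 extA.
suff /mx2_eq0[_ c0 _ a0] : mx2 0 (c / 2) 0 (a / 2) = 0.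
  have [a0' c0'] : a = 0 /\ c = 0 by split; lra.
  by move: ac1; rewrite a0' c0' expr0n addr0 => /eqP; rewrite eq_sym oner_eq0.
apply: (extreme_point_ball_perturb extA) => s s2.
rewrite scale_mx2 add_mx2 !mulr0 !addr0; apply/contraction_mx2 => p q.
have -> : (a * p + (0 + s * (c / 2)) * q) ^+ 4 + (c * p + (0 + s * (a / 2)) * q) ^+ 4
    = (a ^+ 4 + c ^+ 4) * (p ^+ 4 + (s ^+ 2) ^+ 2 / 16 * q ^+ 4).
  have : (a == 0) || (c == 0) by rewrite -mulf_eq0 ac0.
  by case/orP => /eqP->; field.
by rewrite ac1 s2 expr1n mul1r; have := pow4_ge0 q; lra.
Qed.

Lemma contraction_rank1_perturb u1 u2 b : (u1 != 0) || (u2 != 0) -> b != 0 ->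
  contraction (mx2 u1 (b ^+ 3 * u1) u2 (b ^+ 3 * u2)) ->
  exists2 E, E != 0 & forall s, s ^+ 2 = 1 ->
    contraction (mx2 u1 (b ^+ 3 * u1) u2 (b ^+ 3 * u2) + s *: E).
Proof.
move=> u0 b0 /contraction_mx2 cA.
have U0 : 0 < u1 ^+ 4 + u2 ^+ 4.
  by rewrite lt_def paddr_eq0 ?pow4_ge0 // !expf_eq0 /= negb_and u0 addr_ge0 ?pow4_ge0.
have N0 : 0 < 1 + b ^+ 4 by rewrite ltr_wpDr ?pow4_ge0.
have UN : (u1 ^+ 4 + u2 ^+ 4) * (1 + b ^+ 4) ^+ 3 <= 1.
  rewrite -(ler_pM2r N0) mul1r.
  have -> : (u1 ^+ 4 + u2 ^+ 4) * (1 + b ^+ 4) ^+ 3 * (1 + b ^+ 4) =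
    (u1 * 1 + b ^+ 3 * u1 * b) ^+ 4 + (u2 * 1 + b ^+ 3 * u2 * b) ^+ 4 by ring.
  by have := cA 1 b; rewrite expr1n.
have [e e0 small] := pow4_rank1_perturb b0 U0 UN.
exists (e *: mx2 (b * u2 ^+ 3) (- u2 ^+ 3) (- (b * u1 ^+ 3)) (u1 ^+ 3)).
  rewrite scaler_eq0 (gt_eqF e0) /=; apply/negP => /eqP/mx2_eq0[_ /eqP + _ /eqP].
  by rewrite oppr_eq0 !expf_eq0 /= => u20 u10; move: u0; rewrite u10 u20.
move=> s s2; rewrite scalerA scale_mx2 add_mx2; apply/contraction_mx2 => p q.
apply: le_trans _ (small (s * e) p q _); last by rewrite exprMn s2 mul1r.
by rewrite le_eqVlt; apply/predU1l; ring.
Qed.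

Lemma not_extreme_rank1 a c k : (a != 0) || (c != 0) -> k != 0 ->
  ~ extreme_point_ball (mx2 a (k * a) c (k * c)).
Proof.
move=> ac0 k0 extA; have [b b3] := exists_cube_root k.
have b0 : b != 0 by apply: contraNneq k0 => b0; rewrite -b3 b0 expr0n.
rewrite -b3 in extA.
have [E /eqP E0 cE] := contraction_rank1_perturb ac0 b0 ((in_unit_ballP _).1 extA.1).
exact/E0/(extreme_point_ball_perturb extA cE).
Qed.

Lemma extreme_contraction_rank1 a c k : (a != 0) || (c != 0) ->
  extreme_contraction (mx2 a (k * a) c (k * c)) -> k = 0.
Proof.
move=> ac0 [_ extA]; apply/eqP; apply: contraT => k0.
by case: (not_extreme_rank1 ac0 k0 extA).
Qed.

Lemma extreme_contraction_colP x y :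
  extreme_contraction (mx2 x 0 y 0) <-> x * y != 0 /\ x ^+ 4 + y ^+ 4 = 1.
Proof.
split=> [[/opnorm_col_eq1 xy1 extA] | [xy0 xy1]]; last exact: extreme_contraction_col.
split=> //; apply/negP => /eqP xy0; exact: not_extreme_coord_col xy0 xy1 extA.
Qed.

End L4Norm.

Theorem mainTheorem12 (R : realType) (A : 'M[R]_2) :
  (\rank A = 1%N /\ extreme_contraction A) <->
  exists x1 y1 : R,
    [/\ x1 * y1 != 0, x1 ^+ 4 + y1 ^+ 4 = 1 &
      (A = \matrix_(i < 2, j < 2)
             (if j == ord0 then (if i == ord0 then x1 else y1) else 0)
       \/ A = \matrix_(i < 2, j < 2)
             (if j == ord_max then (if i == ord0 then x1 else y1) else 0))].
Proof.
split=> [[rA extA] | [x [y [xy0 xy1]]]].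
  have [a [c [k [ac0 [defA | defA]]]]] := rank_eq1_mx2 rA; exists a, c.
    have k0 : k = 0 by apply: extreme_contraction_rank1 ac0 _; rewrite -defA.
    have [] := (extreme_contraction_colP a c).1; first by move: extA; rewrite defA k0 !mul0r.
    by split=> //; left; rewrite defA k0 !mul0r mx2_col0E.
  have [] := (extreme_contraction_colP a c).1.
    by rewrite -(mx2_swap 0 a 0 c) -defA; exact: extreme_contraction_swap.
  by split=> //; right; rewrite mx2_col1E.
rewrite mx2_col0E mx2_col1E => defA.
have rk : \rank (mx2 x 0 y 0) = 1%N.
  by apply: rank_mx2_col; move: xy0; rewrite mulf_eq0 negb_or => /andP[->].
have ext := (extreme_contraction_colP x y).2 (conj xy0 xy1).
case: defA => ->; first by [].
by rewrite -mx2_swap mxrank_swap; split=> //; apply: extreme_contraction_swap.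
Qed.
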